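(* Let $K\subset[0,1]$ be the triadic Cantor set. Then there exist functions $f,g\in C(K,\mathbb{R})$ such that \[ \overline{\dim}_B \operatorname{graph}(f+g)> \max\{\overline{\dim}_B \operatorname{graph}(f),\overline{\dim}_B \operatorname{graph}(g)\}. \]
   Context: $\operatorname{graph}(h)=\{(x,h(x)):x\in K\}\subset\mathbb{R}^2$ with the Euclidean metric. For a non-empty bounded set $X$ in a metric space, $N_n(X)$ is the maximal cardinality of a subset whose points are pairwise at distance $>2^{-n}$, and $\overline{\dim}_B X=\limsup_n \frac{\log N_n(X)}{n\log 2}$ (upper box dimension). *)

From Stdlib Require Import Reals Lra List.
Open Scope R_scope.

Definition cantor (x : R) : Prop :=
  exists b : nat -> bool,
    infinite_sum (fun i => (if b i then 2 else 0) / 3 ^ (S i)) x.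

Definition continuous_on_cantor (h : R -> R) : Prop :=
  forall x, cantor x -> forall eps, eps > 0 ->
    exists delta, delta > 0 /\
      forall y, cantor y -> Rabs (y - x) < delta -> Rabs (h y - h x) < eps.

Definition graph (h : R -> R) (p : R * R) : Prop :=
  exists x, cantor x /\ p = (x, h x).

Definition dist2 (p q : R * R) : R :=
  sqrt ((fst p - fst q) ^ 2 + (snd p - snd q) ^ 2).

Definition separated (X : R * R -> Prop) (r : R) (l : list (R * R)) : Prop :=
  NoDup l /\ (forall p, In p l -> X p) /\
  (forall p q, In p l -> In q l -> p <> q -> dist2 p q > r).

Definition is_packing_number (X : R * R -> Prop) (n : nat) (m : nat) : Prop :=
  (exists l, separated X (/ 2 ^ n) l /\ length l = m) /\
  (forall l, separated X (/ 2 ^ n) l -> (length l <= m)%nat).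

Definition is_limsup (u : nat -> R) (L : R) : Prop :=
  forall eps, eps > 0 ->
    (exists N, forall n, (n >= N)%nat -> u n < L + eps) /\
    (forall N, exists n, (n >= N)%nat /\ u n > L - eps).

Definition is_upper_box_dim (X : R * R -> Prop) (d : R) : Prop :=
  exists N : nat -> nat,
    (forall n, is_packing_number X n (N n)) /\
    is_limsup (fun n => ln (INR (N n)) / (INR n * ln 2)) d.

From Stdlib Require Import Reals Lra Lia List Wf_nat.
From Stdlib Require Import Classical ClassicalEpsilon FunctionalExtensionality.
Open Scope R_scope.

(* Write x in K as sum 2 b_i 3^-(i+1) and let h(x) = sum b_i 2^-(i+1) be the Cantor function;
   f keeps only the terms with i even and g those with i odd, so h = f + g.  Up to
   distance 2^-n, a point of the graph of f is determined by the first L ~ 2n/3 ternary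
   digits of x (since 3^-L <= 2^-(n+1)) together with the even-indexed digits among the
   remaining ones below n+1, about n/6 of them.  So a 2^-n-separated subset of the graph has
   at most 2^(5n/6 + O(1)) points, and the graphs of f and g have dimension at most 5/6.
   The graph of h contains 2^m points whose second coordinates are pairwise 2^-m apart,
   so its upper box dimension is at least 1. *)

(** * Series with geometrically dominated terms *)

Definition geom_dominated (B : R) (d : nat -> R) : Prop :=
  forall i, Rabs (d i) <= (B - 1) / B ^ S i.

Definition geom_bounded (B : R) (t : nat -> R) : Prop :=
  forall i, 0 <= t i <= (B - 1) / B ^ S i.

Definition series_sum (t : nat -> R) : R := epsilon (inhabits 0) (infinite_sum t).

Lemma infinite_sum_series_sum t : (exists l, infinite_sum t l) -> infinite_sum t (series_sum t).
Proof. apply epsilon_spec. Qed.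

Lemma Un_cv_const c : Un_cv (fun _ => c) c.
Proof.
  intros eps Heps. exists 0%nat. intros n _. unfold Rdist. rewrite Rminus_diag, Rabs_R0. lra.
Qed.

Lemma Un_cv_le_eventually u v l1 l2 N :
  Un_cv u l1 -> Un_cv v l2 -> (forall n, (N <= n)%nat -> u n <= v n) -> l1 <= l2.
Proof.
  intros Hu Hv Huv. apply Rnot_lt_le. intros Hlt.
  destruct (Hu ((l1 - l2) / 2)) as [N1 H1]; [lra|].
  destruct (Hv ((l1 - l2) / 2)) as [N2 H2]; [lra|].
  set (n := Nat.max N (Nat.max N1 N2)).
  specialize (H1 n ltac:(lia)). specialize (H2 n ltac:(lia)). specialize (Huv n ltac:(lia)).
  unfold Rdist in H1, H2. apply Rabs_def2 in H1, H2. lra.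
Qed.

Lemma infinite_sum_sub t1 t2 l1 l2 : infinite_sum t1 l1 -> infinite_sum t2 l2 ->
  Un_cv (sum_f_R0 (fun i => t1 i - t2 i)) (l1 - l2).
Proof.
  intros H1 H2. intros eps Heps. destruct (CV_minus _ _ _ _ H1 H2 eps Heps) as [N HN].
  exists N. intros n Hn. rewrite minus_sum. exact (HN n Hn).
Qed.

Lemma sum_f_R0_split_at d j n :
  sum_f_R0 d n =
  sum_f_R0 (fun i => if Nat.eqb i j then 0 else d i) n + (if Nat.leb j n then d j else 0).
Proof.
  induction n as [|n IH].
  - destruct j; simpl; ring.
  - rewrite !tech5, IH. destruct (Nat.eqb_spec (S n) j), (Nat.leb_spec j n), (Nat.leb_spec j (S n));
      subst; try lia; ring.
Qed.

Lemma infinite_sum_dist_ge t1 t2 l1 l2 j r : infinite_sum t1 l1 -> infinite_sum t2 l2 ->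
  (forall n, Rabs (sum_f_R0 (fun i => if Nat.eqb i j then 0 else t1 i - t2 i) n) <= r) ->
  Rabs (t1 j - t2 j) - r <= Rabs (l1 - l2).
Proof.
  intros H1 H2 Hr.
  apply (Un_cv_le_eventually _ _ _ _ j (Un_cv_const _)
    (cv_cvabs _ _ (infinite_sum_sub _ _ _ _ H1 H2))).
  intros n Hn. rewrite (sum_f_R0_split_at _ j n). destruct (Nat.leb_spec j n); [|lia].
  specialize (Hr n). set (s := sum_f_R0 _ n) in *.
  pose proof (Rabs_triang (s + (t1 j - t2 j)) (- s)) as Htri.
  replace (s + (t1 j - t2 j) + - s) with (t1 j - t2 j) in Htri by ring.
  rewrite Rabs_Ropp in Htri. lra.
Qed.

Section GeometricTails.

Variable B : R.
Hypothesis B_gt_1 : 1 < B.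

Lemma Rinv_pow_pos n : 0 < / B ^ n.
Proof. apply Rinv_0_lt_compat, pow_lt; lra. Qed.

Lemma Rinv_pow_le_contravar m n : (m <= n)%nat -> / B ^ n <= / B ^ m.
Proof.
  intros Hmn. apply Rinv_le_contravar; [apply pow_lt; lra | apply Rle_pow; [lra | exact Hmn]].
Qed.

Lemma geom_term_telescope n : (B - 1) / B ^ S n = / B ^ n - / B ^ S n.
Proof. assert (B ^ n <> 0) by (apply pow_nonzero; lra). simpl. field. split; lra. Qed.

Lemma geom_weight_pos n : 0 < (B - 1) / B ^ S n.
Proof. apply Rdiv_lt_0_compat; [lra | apply pow_lt; lra]. Qed.

Lemma geom_bounded_dominated t : geom_bounded B t -> geom_dominated B t.
Proof. intros Ht i. rewrite Rabs_pos_eq; apply Ht. Qed.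

Lemma geom_bounded_sub_dominated t1 t2 :
  geom_bounded B t1 -> geom_bounded B t2 -> geom_dominated B (fun i => t1 i - t2 i).
Proof. intros H1 H2 i. specialize (H1 i). specialize (H2 i). apply Rabs_le. lra. Qed.

Section Window.

Variables L U : nat.

(* Bound on the first [k] partial sums of terms supported in the window [L, U). *)
Let window k := / B ^ L - / B ^ Nat.max L (Nat.min k U).

Lemma window_step d k : Rabs (d k) <= (B - 1) / B ^ S k ->
  ((k < L \/ U <= k)%nat -> d k = 0) -> Rabs (d k) + window k <= window (S k).
Proof.
  intros Hd Hout. unfold window.
  destruct (classic ((k < L)%nat \/ (U <= k)%nat)) as [Hk|Hk].
  - rewrite (Hout Hk), Rabs_R0.
    assert (/ B ^ Nat.max L (Nat.min (S k) U) <= / B ^ Nat.max L (Nat.min k U))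
      by (apply Rinv_pow_le_contravar; lia).
    lra.
  - replace (Nat.max L (Nat.min k U)) with k by lia.
    replace (Nat.max L (Nat.min (S k) U)) with (S k) by lia.
    rewrite geom_term_telescope in Hd. lra.
Qed.

Lemma partial_sum_window_le d n : geom_dominated B d ->
  (forall i, (i <= n)%nat -> (i < L \/ U <= i)%nat -> d i = 0) ->
  Rabs (sum_f_R0 d n) <= window (S n).
Proof.
  intros Hd Hout. induction n as [|n IH]; simpl sum_f_R0.
  - assert (window 0 = 0) by (unfold window; rewrite Nat.max_l by lia; ring).
    pose proof (window_step d 0 (Hd 0%nat) (Hout 0%nat (le_n 0))). lra.
  - eapply Rle_trans; [apply Rabs_triang|].
    pose proof (IH (fun i Hi => Hout i ltac:(lia))).
    pose proof (window_step d (S n) (Hd _) (Hout _ (le_n _))). lra.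
Qed.

End Window.

Lemma partial_sum_tail_le d L n : geom_dominated B d ->
  (forall i, (i < L)%nat -> d i = 0) -> Rabs (sum_f_R0 d n) <= / B ^ L.
Proof.
  intros Hd H0. eapply Rle_trans.
  - apply (partial_sum_window_le L (S n) d n Hd). intros i Hi [HL|HU]; [auto|lia].
  - pose proof (Rinv_pow_pos (Nat.max L (Nat.min (S n) (S n)))). lra.
Qed.

Lemma geom_bounded_summable t : geom_bounded B t -> infinite_sum t (series_sum t).
Proof.
  intros Ht. apply infinite_sum_series_sum.
  assert (Hgrow : Un_growing (sum_f_R0 t)) by (intros n; simpl; pose proof (Ht (S n)); lra).
  assert (Hub : has_ub (sum_f_R0 t)).
  { exists 1. intros s [n ->].
    pose proof (partial_sum_tail_le t 0 n (geom_bounded_dominated t Ht) ltac:(intros; lia)) as Hn.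
    simpl in Hn. rewrite Rinv_1 in Hn. pose proof (Rle_abs (sum_f_R0 t n)). lra. }
  destruct (growing_cv _ Hgrow Hub) as [l Hl]. exists l. exact Hl.
Qed.

Lemma infinite_sum_dist_le t1 t2 l1 l2 L : infinite_sum t1 l1 -> infinite_sum t2 l2 ->
  geom_dominated B (fun i => t1 i - t2 i) -> (forall i, (i < L)%nat -> t1 i = t2 i) ->
  Rabs (l1 - l2) <= / B ^ L.
Proof.
  intros H1 H2 Hd Heq.
  apply (Un_cv_le_eventually _ _ _ _ 0 (cv_cvabs _ _ (infinite_sum_sub _ _ _ _ H1 H2))
    (Un_cv_const _)).
  intros n _. apply partial_sum_tail_le; [exact Hd|]. intros i Hi. rewrite Heq by exact Hi. ring.
Qed.

Lemma infinite_sum_dist_ge_tail t1 t2 l1 l2 j : infinite_sum t1 l1 -> infinite_sum t2 l2 ->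
  geom_dominated B (fun i => t1 i - t2 i) -> (forall i, (i < j)%nat -> t1 i = t2 i) ->
  Rabs (t1 j - t2 j) - / B ^ S j <= Rabs (l1 - l2).
Proof.
  intros H1 H2 Hd Heq. apply infinite_sum_dist_ge; [exact H1 | exact H2 |]. intros n.
  apply partial_sum_tail_le.
  - intros i. destruct (Nat.eqb i j); [|apply Hd]. rewrite Rabs_R0. left. apply geom_weight_pos.
  - intros i Hi. destruct (Nat.eqb_spec i j); [reflexivity|]. rewrite Heq by lia. ring.
Qed.

Lemma infinite_sum_dist_ge_window t1 t2 l1 l2 j U :
  infinite_sum t1 l1 -> infinite_sum t2 l2 -> geom_dominated B (fun i => t1 i - t2 i) ->
  (forall i, (i < j)%nat -> t1 i = t2 i) -> (S j <= U)%nat ->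
  (forall i, (U <= i)%nat -> t1 i = t2 i) ->
  Rabs (t1 j - t2 j) - (/ B ^ S j - / B ^ U) <= Rabs (l1 - l2).
Proof.
  intros H1 H2 Hd Hlow HjU Hhigh. apply infinite_sum_dist_ge; [exact H1 | exact H2 |]. intros n.
  eapply Rle_trans; [apply (partial_sum_window_le (S j) U)|].
  - intros i. destruct (Nat.eqb i j); [|apply Hd]. rewrite Rabs_R0. left. apply geom_weight_pos.
  - intros i _ Hi. destruct (Nat.eqb_spec i j); [reflexivity|].
    destruct Hi; [rewrite Hlow by lia | rewrite Hhigh by lia]; ring.
  - assert (/ B ^ U <= / B ^ Nat.max (S j) (Nat.min (S n) U)) by (apply Rinv_pow_le_contravar; lia).
    lra.
Qed.

End GeometricTails.

(** * Ternary expansions of points of the Cantor set *)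

Definition cantor_term (b : nat -> bool) (i : nat) : R := (if b i then 2 else 0) / 3 ^ S i.

Lemma cantor_term_bounded b : geom_bounded 3 (cantor_term b).
Proof.
  intros i. unfold cantor_term, Rdiv. pose proof (Rinv_pow_pos 3 ltac:(lra) (S i)).
  destruct (b i); lra.
Qed.

Lemma cantor_term_gap b b' i : b i <> b' i ->
  Rabs (cantor_term b i - cantor_term b' i) = 2 / 3 ^ S i.
Proof.
  intros Hi. unfold cantor_term. pose proof (Rinv_pow_pos 3 ltac:(lra) (S i)).
  unfold Rdiv. destruct (b i), (b' i); try congruence.
  - rewrite Rabs_pos_eq; lra.
  - rewrite Rabs_left; lra.
Qed.

Lemma first_mismatch (b b' : nat -> bool) j : b j <> b' j ->
  exists k, (k <= j)%nat /\ b k <> b' k /\ forall i, (i < k)%nat -> b i = b' i.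
Proof.
  intros Hj.
  destruct (dec_inh_nat_subset_has_unique_least_element (fun k => b k <> b' k)
    (fun k => classic _) (ex_intro _ j Hj)) as [k [[Hk Hmin] _]].
  exists k. split; [exact (Hmin j Hj) | split; [exact Hk |]].
  intros i Hi. destruct (Bool.bool_dec (b i) (b' i)) as [|Hne]; [assumption|].
  specialize (Hmin i Hne). lia.
Qed.

Lemma cantor_sum_sep b b' x y j :
  infinite_sum (cantor_term b) x -> infinite_sum (cantor_term b') y ->
  (forall i, (i < j)%nat -> b i = b' i) -> b j <> b' j -> / 3 ^ S j <= Rabs (x - y).
Proof.
  intros Hx Hy Hlow Hj.
  pose proof (infinite_sum_dist_ge_tail 3 ltac:(lra) _ _ _ _ j Hx Hy
    (geom_bounded_sub_dominated 3 _ _ (cantor_term_bounded b) (cantor_term_bounded b'))) as H.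
  rewrite cantor_term_gap in H by exact Hj.
  replace (2 / 3 ^ S j - / 3 ^ S j) with (/ 3 ^ S j) in H by (field; apply pow_nonzero; lra).
  apply H. intros i Hi. unfold cantor_term. rewrite Hlow by exact Hi. reflexivity.
Qed.

Lemma cantor_digits_unique b b' x :
  infinite_sum (cantor_term b) x -> infinite_sum (cantor_term b') x -> b = b'.
Proof.
  intros Hb Hb'. apply functional_extensionality. intros i.
  destruct (Bool.bool_dec (b i) (b' i)) as [|Hne]; [assumption|].
  destruct (first_mismatch b b' i Hne) as [k [_ [Hk Hlow]]].
  pose proof (cantor_sum_sep b b' x x k Hb Hb' Hlow Hk) as Hsep.
  rewrite Rminus_diag, Rabs_R0 in Hsep. pose proof (Rinv_pow_pos 3 ltac:(lra) (S k)). lra.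
Qed.

Lemma cantor_digits_agree b b' x y k :
  infinite_sum (cantor_term b) x -> infinite_sum (cantor_term b') y ->
  Rabs (x - y) < / 3 ^ k -> forall i, (i < k)%nat -> b i = b' i.
Proof.
  intros Hx Hy Hxy i Hi. destruct (Bool.bool_dec (b i) (b' i)) as [|Hne]; [assumption|].
  destruct (first_mismatch b b' i Hne) as [j [Hj [Hbj Hlow]]].
  pose proof (cantor_sum_sep b b' x y j Hx Hy Hlow Hbj).
  pose proof (Rinv_pow_le_contravar 3 ltac:(lra) (S j) k ltac:(lia)). lra.
Qed.

(* Arbitrary outside the Cantor set; on it the expansion is unique by [cantor_digits_unique]. *)
Definition cantor_digits (x : R) : nat -> bool :=
  epsilon (inhabits (fun _ => false)) (fun b => infinite_sum (cantor_term b) x).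

Lemma cantor_digits_spec x : cantor x -> infinite_sum (cantor_term (cantor_digits x)) x.
Proof. intros Hx. unfold cantor_digits. apply epsilon_spec. exact Hx. Qed.

Definition list_digits (s : list bool) (i : nat) : bool := nth i s false.

Definition cantor_point (s : list bool) : R := series_sum (cantor_term (list_digits s)).

Lemma cantor_point_spec s : infinite_sum (cantor_term (list_digits s)) (cantor_point s).
Proof. apply (geom_bounded_summable 3); [lra | apply cantor_term_bounded]. Qed.

Lemma cantor_point_cantor s : cantor (cantor_point s).
Proof. exists (list_digits s). apply cantor_point_spec. Qed.

Lemma cantor_digits_point s : cantor_digits (cantor_point s) = list_digits s.
Proof.
  apply (cantor_digits_unique _ _ (cantor_point s)).
  - apply cantor_digits_spec, cantor_point_cantor.
  - apply cantor_point_spec.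
Qed.

(** * Cantor functions restricted to a set of digit positions *)

(* [masked_cantor (fun _ => true)] is the Cantor function; a mask selects the digit
   positions that are kept, so complementary masks split the Cantor function into a sum. *)
Definition masked_term (m b : nat -> bool) (i : nat) : R :=
  if (m i && b i)%bool then / 2 ^ S i else 0.

Definition masked_cantor (m : nat -> bool) (x : R) : R :=
  series_sum (masked_term m (cantor_digits x)).

Lemma masked_term_bounded m b : geom_bounded 2 (masked_term m b).
Proof.
  intros i. unfold masked_term. pose proof (Rinv_pow_pos 2 ltac:(lra) (S i)).
  replace ((2 - 1) / 2 ^ S i) with (/ 2 ^ S i) by (field; apply pow_nonzero; lra).
  destruct (m i && b i)%bool; lra.
Qed.

Lemma masked_term_summable m b : infinite_sum (masked_term m b) (series_sum (masked_term m b)).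
Proof. apply (geom_bounded_summable 2); [lra | apply masked_term_bounded]. Qed.

Lemma masked_term_gap m b b' i : m i = true -> b i <> b' i ->
  Rabs (masked_term m b i - masked_term m b' i) = / 2 ^ S i.
Proof.
  intros Hm Hb. unfold masked_term. rewrite Hm. pose proof (Rinv_pow_pos 2 ltac:(lra) (S i)).
  destruct (b i), (b' i); cbn [andb]; try congruence.
  - rewrite Rminus_0_r, Rabs_pos_eq; lra.
  - rewrite Rminus_0_l, Rabs_Ropp, Rabs_pos_eq; lra.
Qed.

Lemma masked_term_dist_le m b b' L :
  (forall i, (i < L)%nat -> m i = true -> b i = b' i) ->
  Rabs (series_sum (masked_term m b) - series_sum (masked_term m b')) <= / 2 ^ L.
Proof.
  intros Hag. apply (infinite_sum_dist_le 2 ltac:(lra) (masked_term m b) (masked_term m b'));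
    try apply masked_term_summable.
  - apply geom_bounded_sub_dominated; apply masked_term_bounded.
  - intros i Hi. unfold masked_term.
    destruct (m i) eqn:Hm; [rewrite (Hag i Hi Hm) |]; reflexivity.
Qed.

Lemma Rinv_pow2_lt eps : 0 < eps -> exists k, / 2 ^ k < eps.
Proof.
  intros Heps. destruct (pow_lt_1_zero (/ 2) ltac:(rewrite Rabs_pos_eq; lra) eps Heps) as [k Hk].
  exists k. specialize (Hk k (le_n k)).
  rewrite pow_inv, Rabs_pos_eq in Hk by (left; apply Rinv_pow_pos; lra). exact Hk.
Qed.

Lemma masked_cantor_continuous m : continuous_on_cantor (masked_cantor m).
Proof.
  intros x Hx eps Heps. destruct (Rinv_pow2_lt eps Heps) as [k Hk].
  exists (/ 3 ^ k). split; [apply Rinv_pow_pos; lra|]. intros y Hy Hyx.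
  eapply Rle_lt_trans; [|exact Hk]. apply masked_term_dist_le. intros i Hi _.
  exact (cantor_digits_agree _ _ _ _ k (cantor_digits_spec y Hy) (cantor_digits_spec x Hx)
    Hyx i Hi).
Qed.

Lemma masked_cantor_add m1 m2 x : (forall i, (m1 i && m2 i)%bool = false) ->
  masked_cantor m1 x + masked_cantor m2 x = masked_cantor (fun i => (m1 i || m2 i)%bool) x.
Proof.
  intros Hdisj. unfold masked_cantor. set (b := cantor_digits x).
  apply (uniqueness_sum (masked_term (fun i => (m1 i || m2 i)%bool) b));
    [|apply masked_term_summable].
  intros eps Heps.
  destruct (CV_plus _ _ _ _ (masked_term_summable m1 b) (masked_term_summable m2 b) eps Heps)
    as [N HN].
  exists N. intros n Hn. rewrite <- (sum_eq (fun i => masked_term m1 b i + masked_term m2 b i)).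
  - rewrite sum_plus. exact (HN n Hn).
  - intros i _. unfold masked_term. specialize (Hdisj i).
    destruct (m1 i), (m2 i), (b i); simpl in *; try discriminate; ring.
Qed.

(** * Packing numbers and upper box dimension *)

Fixpoint bool_lists (k : nat) : list (list bool) :=
  match k with
  | O => nil :: nil
  | S k => map (cons false) (bool_lists k) ++ map (cons true) (bool_lists k)
  end.

Lemma bool_lists_length k : length (bool_lists k) = (2 ^ k)%nat.
Proof. induction k as [|k IH]; simpl; [reflexivity|]. rewrite length_app, !length_map, IH. lia. Qed.

Lemma In_bool_lists s k : In s (bool_lists k) <-> length s = k.
Proof.
  revert s. induction k as [|k IH]; intros s; simpl.
  - split; [intros [<- | []]; reflexivity | destruct s; [auto | discriminate]].
  - rewrite in_app_iff, !in_map_iff. split.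
    + intros [[s' [<- Hs']] | [s' [<- Hs']]]; simpl; rewrite (proj1 (IH s') Hs'); reflexivity.
    + destruct s as [|[] s]; simpl; intros Hs; [discriminate | right | left];
        exists s; split; [reflexivity | apply IH; lia | reflexivity | apply IH; lia].
Qed.

Lemma NoDup_bool_lists k : NoDup (bool_lists k).
Proof.
  induction k as [|k IH]; simpl; [repeat constructor; auto|].
  apply NoDup_app;
    try (apply NoDup_map_NoDup_ForallPairs; [intros s s' _ _ Hs; injection Hs |]; auto).
  intros s Hf Ht. apply in_map_iff in Hf, Ht.
  destruct Hf as [? [<- _]], Ht as [? [Ht _]]. discriminate.
Qed.

Lemma separated_length_le_code (X : R * R -> Prop) r (code : R * R -> list bool) k :
  (forall p, X p -> length (code p) = k) ->
  (forall p q, X p -> X q -> code p = code q -> dist2 p q <= r) ->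
  forall l, separated X r l -> (length l <= 2 ^ k)%nat.
Proof.
  intros Hlen Hcode l [Hnd [HX Hsep]].
  rewrite <- (length_map code l), <- bool_lists_length. apply NoDup_incl_length.
  - apply NoDup_map_NoDup_ForallPairs; [|exact Hnd].
    intros p q Hp Hq Heq. apply NNPP. intros Hne.
    specialize (Hsep p q Hp Hq Hne). specialize (Hcode p q (HX p Hp) (HX q Hq) Heq). lra.
  - intros s Hs. apply in_map_iff in Hs. destruct Hs as [p [<- Hp]].
    apply In_bool_lists, Hlen, HX, Hp.
Qed.

Lemma dist2_le_Rabs p q : dist2 p q <= Rabs (fst p - fst q) + Rabs (snd p - snd q).
Proof.
  unfold dist2. pose proof (Rabs_pos (fst p - fst q)). pose proof (Rabs_pos (snd p - snd q)).
  rewrite <- (sqrt_pow2 (Rabs (fst p - fst q) + Rabs (snd p - snd q))) by lra.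
  apply sqrt_le_1_alt. rewrite <- (pow2_abs (fst p - fst q)), <- (pow2_abs (snd p - snd q)). nra.
Qed.

Lemma Rabs_snd_le_dist2 p q : Rabs (snd p - snd q) <= dist2 p q.
Proof.
  unfold dist2. rewrite <- (sqrt_pow2 (Rabs (snd p - snd q))) by apply Rabs_pos.
  apply sqrt_le_1_alt. rewrite pow2_abs. pose proof (pow2_ge_0 (fst p - fst q)). lra.
Qed.

Lemma packing_number_exists X n p k : X p ->
  (forall l, separated X (/ 2 ^ n) l -> (length l <= k)%nat) ->
  exists N, is_packing_number X n N /\ (1 <= N)%nat.
Proof.
  intros Hp Hk.
  assert (Hsingle : separated X (/ 2 ^ n) (p :: nil)).
  { split; [repeat constructor; auto | split].
    - intros q [<- | []]. exact Hp.
    - intros q q' [<- | []] [<- | []] Hne. congruence. }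
  destruct (dec_inh_nat_subset_has_unique_least_element
    (fun N => forall l, separated X (/ 2 ^ n) l -> (length l <= N)%nat)
    (fun N => classic _) (ex_intro _ k Hk)) as [N [[HN Hmin] _]].
  pose proof (HN _ Hsingle) as HN1. simpl in HN1.
  exists N. split; [split; [|exact HN] | exact HN1].
  destruct N as [|N]; [lia|]. apply NNPP. intros Hnone.
  enough (S N <= N)%nat by lia. apply Hmin. intros l Hl.
  specialize (HN l Hl). destruct (Nat.eq_dec (length l) (S N)) as [Heq|]; [|lia].
  exfalso. apply Hnone. exists l. auto.
Qed.

Lemma lub_approx E s eps : is_lub E s -> 0 < eps -> exists y, E y /\ s - eps < y.
Proof.
  intros [Hub Hleast] Heps. apply NNPP. intros Hnone.
  enough (s <= s - eps) by lra. apply Hleast. intros y Hy.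
  apply Rnot_lt_le. intros Hlt. apply Hnone. exists y. auto.
Qed.

Lemma limsup_exists u C : (forall n, (1 <= n)%nat -> 0 <= u n <= C) -> exists L, is_limsup u L.
Proof.
  intros Hu.
  set (tail N y := exists n, (Nat.max N 1 <= n)%nat /\ y = u n).
  assert (Htail_bound : forall N, bound (tail N)).
  { intros N. exists C. intros y [n [Hn ->]]. apply Hu. lia. }
  assert (Htail_ne : forall N, exists y, tail N y)
    by (intros N; exists (u (Nat.max N 1)), (Nat.max N 1); auto).
  set (sup N := proj1_sig (completeness (tail N) (Htail_bound N) (Htail_ne N))).
  assert (Hsup : forall N, is_lub (tail N) (sup N))
    by (intros N; exact (proj2_sig (completeness _ _ _))).
  assert (Hsup_nonneg : forall N, 0 <= sup N).
  { intros N. apply Rle_trans with (u (Nat.max N 1)); [apply Hu; lia|].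
    apply (proj1 (Hsup N)). exists (Nat.max N 1). auto. }
  set (negsups y := exists N, y = - sup N).
  assert (Hneg_bound : bound negsups)
    by (exists 0; intros y [N ->]; pose proof (Hsup_nonneg N); lra).
  destruct (completeness negsups Hneg_bound (ex_intro _ _ (ex_intro _ 0%nat eq_refl))) as [M HM].
  exists (- M). intros eps Heps. split.
  - destruct (lub_approx negsups M eps HM Heps) as [y [[N ->] Hy]].
    exists (Nat.max N 1). intros n Hn.
    assert (u n <= sup N) by (apply (proj1 (Hsup N)); exists n; split; [lia | reflexivity]). lra.
  - intros N. destruct (lub_approx (tail N) (sup N) eps (Hsup N) Heps) as [y [[n [Hn ->]] Hy]].
    exists n. split; [lia|].
    assert (- sup N <= M) by (apply (proj1 HM); exists N; reflexivity). lra.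
Qed.

Lemma Rabs_div_INR_eventually_lt C eps : 0 < eps ->
  exists N, forall n, (N <= n)%nat -> Rabs C / INR n < eps.
Proof.
  intros Heps. destruct (archimed_cor1 (eps / (Rabs C + 1))) as [N [HN HN0]].
  { apply Rdiv_lt_0_compat; [exact Heps | pose proof (Rabs_pos C); lra]. }
  exists N. intros n Hn. pose proof (Rabs_pos C).
  assert (HnN : INR N <= INR n) by (apply le_INR; exact Hn).
  assert (HN0' : 0 < INR N) by (apply lt_0_INR; exact HN0).
  apply Rle_lt_trans with ((Rabs C + 1) * / INR N).
  - unfold Rdiv. apply Rmult_le_compat; try lra.
    + left. apply Rinv_0_lt_compat. lra.
    + apply Rinv_le_contravar; lra.
  - replace eps with ((Rabs C + 1) * (eps / (Rabs C + 1))) by (field; lra).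
    apply Rmult_lt_compat_l; lra.
Qed.

Lemma div_INR_le_Rabs C n : (1 <= n)%nat -> C / INR n <= Rabs C / INR n <= Rabs C.
Proof.
  intros Hn. assert (1 <= INR n) by (apply (le_INR 1); exact Hn). pose proof (Rabs_pos C).
  unfold Rdiv. split.
  - apply Rmult_le_compat_r; [left; apply Rinv_0_lt_compat; lra | apply Rle_abs].
  - rewrite <- (Rmult_1_r (Rabs C)) at 2. apply Rmult_le_compat_l; [lra|].
    rewrite <- Rinv_1. apply Rinv_le_contravar; lra.
Qed.

Lemma limsup_le_of_le u L c C : is_limsup u L ->
  (forall n, (1 <= n)%nat -> u n <= c + C / INR n) -> L <= c.
Proof.
  intros HL Hu. apply Rnot_lt_le. intros Hlt.
  destruct (Rabs_div_INR_eventually_lt C ((L - c) / 2)) as [N HN]; [lra|].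
  destruct (proj2 (HL ((L - c) / 2) ltac:(lra)) (Nat.max N 1)) as [n [Hn Hun]].
  specialize (Hu n ltac:(lia)). specialize (HN n ltac:(lia)).
  pose proof (div_INR_le_Rabs C n ltac:(lia)). lra.
Qed.

Lemma limsup_ge_of_ge u L c C : is_limsup u L ->
  (forall n, (1 <= n)%nat -> c - C / INR n <= u n) -> c <= L.
Proof.
  intros HL Hu. apply Rnot_lt_le. intros Hlt.
  destruct (Rabs_div_INR_eventually_lt C ((c - L) / 2)) as [N HN]; [lra|].
  destruct (proj1 (HL ((c - L) / 2) ltac:(lra))) as [N' HN'].
  set (n := Nat.max (Nat.max N N') 1).
  specialize (Hu n ltac:(lia)). specialize (HN n ltac:(lia)). specialize (HN' n ltac:(lia)).
  pose proof (div_INR_le_Rabs C n ltac:(lia)). lra.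
Qed.

Lemma ln2_pos : 0 < ln 2.
Proof. rewrite <- ln_1. apply ln_increasing; lra. Qed.

Lemma ln_le x y : 0 < x -> x <= y -> ln x <= ln y.
Proof. intros Hx [Hlt | ->]; [left; apply ln_increasing; assumption | apply Rle_refl]. Qed.

Lemma INR_pow2 K : INR (2 ^ K) = 2 ^ K.
Proof. rewrite pow_INR. reflexivity. Qed.

Lemma packing_ratio_le N K n : (1 <= N)%nat -> (N <= 2 ^ K)%nat -> (1 <= n)%nat ->
  0 <= ln (INR N) / (INR n * ln 2) <= INR K / INR n.
Proof.
  intros HN1 HNK Hn. pose proof ln2_pos.
  assert (Hn0 : 0 < INR n) by (apply lt_0_INR; lia).
  apply le_INR in HN1, HNK. rewrite INR_pow2 in HNK. simpl INR in HN1.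
  assert (0 <= ln (INR N)) by (rewrite <- ln_1; apply ln_le; lra).
  assert (ln (INR N) <= INR K * ln 2) by (rewrite <- ln_pow by lra; apply ln_le; lra).
  replace (INR K / INR n) with (INR K * ln 2 / (INR n * ln 2)) by (field; lra).
  split; unfold Rdiv; apply Rmult_le_compat_r || apply Rmult_le_pos; try lra;
    left; apply Rinv_0_lt_compat; nra.
Qed.

Lemma packing_ratio_ge N K n : (2 ^ K <= N)%nat -> (1 <= n)%nat ->
  INR K / INR n <= ln (INR N) / (INR n * ln 2).
Proof.
  intros HKN Hn. pose proof ln2_pos.
  assert (Hn0 : 0 < INR n) by (apply lt_0_INR; lia).
  apply le_INR in HKN. rewrite INR_pow2 in HKN.
  assert (Hln : INR K * ln 2 <= ln (INR N))
    by (rewrite <- ln_pow by lra; apply ln_le; [apply pow_lt|]; lra).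
  replace (INR K / INR n) with (INR K * ln 2 / (INR n * ln 2)) by (field; lra).
  unfold Rdiv. apply Rmult_le_compat_r; [left; apply Rinv_0_lt_compat; nra | exact Hln].
Qed.

Lemma upper_box_dim_le X p (K : nat -> nat) c C : X p ->
  (forall n l, separated X (/ 2 ^ n) l -> (length l <= 2 ^ K n)%nat) ->
  (forall n, (1 <= n)%nat -> INR (K n) <= c * INR n + C) ->
  exists d, is_upper_box_dim X d /\ d <= c.
Proof.
  intros Hp Hpack HK.
  destruct (choice (fun n N => is_packing_number X n N /\ (1 <= N)%nat)) as [N HN].
  { intros n. exact (packing_number_exists X n p _ Hp (Hpack n)). }
  set (u n := ln (INR (N n)) / (INR n * ln 2)).
  assert (Hu : forall n, (1 <= n)%nat -> 0 <= u n <= c + C / INR n).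
  { intros n Hn. destruct (HN n) as [[[l [Hl Hlen]] _] HN1].
    assert (HNK : (N n <= 2 ^ K n)%nat) by (rewrite <- Hlen; exact (Hpack n l Hl)).
    pose proof (packing_ratio_le _ _ n HN1 HNK Hn) as Hratio.
    assert (Hn0 : 0 < INR n) by (apply lt_0_INR; lia).
    replace (c + C / INR n) with ((c * INR n + C) / INR n) by (field; lra).
    unfold u. split; [apply Hratio|]. eapply Rle_trans; [apply Hratio|].
    unfold Rdiv. apply Rmult_le_compat_r; [left; apply Rinv_0_lt_compat; lra | apply HK, Hn]. }
  destruct (limsup_exists u (c + Rabs C)) as [L HL].
  { intros n Hn. specialize (Hu n Hn). pose proof (div_INR_le_Rabs C n Hn). lra. }
  exists L. split.
  - exists N. split; [intros n; apply HN | exact HL].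
  - apply (limsup_le_of_le u L c C HL). intros n Hn. apply Hu, Hn.
Qed.

Lemma upper_box_dim_ge X d (K : nat -> nat) c C : is_upper_box_dim X d ->
  (forall n, (1 <= n)%nat -> exists l, separated X (/ 2 ^ n) l /\ (2 ^ K n <= length l)%nat) ->
  (forall n, (1 <= n)%nat -> c * INR n - C <= INR (K n)) -> c <= d.
Proof.
  intros [N [HN HL]] Hsep HK. apply (limsup_ge_of_ge _ d c C HL). intros n Hn.
  destruct (Hsep n Hn) as [l [Hl Hlen]].
  pose proof (packing_ratio_ge (N n) (K n) n ltac:(pose proof (proj2 (HN n) l Hl); lia) Hn).
  assert (Hn0 : 0 < INR n) by (apply lt_0_INR; lia).
  enough (c - C / INR n <= INR (K n) / INR n) by lra.
  replace (c - C / INR n) with ((c * INR n - C) / INR n) by (field; lra).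
  unfold Rdiv. apply Rmult_le_compat_r; [left; apply Rinv_0_lt_compat; lra | apply HK, Hn].
Qed.

(** * Box dimension of the graphs *)

Lemma Rinv_pow3_le_pow2 L k : (2 ^ k <= 3 ^ L)%nat -> / 3 ^ L <= / 2 ^ k.
Proof.
  intros Hk. apply Rinv_le_contravar; [apply pow_lt; lra|].
  apply le_INR in Hk. rewrite !pow_INR in Hk.
  replace (INR 2) with 2 in Hk by (simpl; ring). replace (INR 3) with 3 in Hk by (simpl; ring).
  exact Hk.
Qed.

Definition masked_code_length (m : nat -> bool) (L n : nat) : nat :=
  L + length (filter m (seq L (S n - L))).

Lemma masked_cantor_graph_dist_le m x y L n : cantor x -> cantor y -> (2 ^ S n <= 3 ^ L)%nat ->
  (forall i, (i < L)%nat -> cantor_digits x i = cantor_digits y i) ->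
  (forall i, (i < S n)%nat -> m i = true -> cantor_digits x i = cantor_digits y i) ->
  dist2 (x, masked_cantor m x) (y, masked_cantor m y) <= / 2 ^ n.
Proof.
  intros Hx Hy HL Hlow Hmask. eapply Rle_trans; [apply dist2_le_Rabs|]. simpl fst; simpl snd.
  assert (Hdx : Rabs (x - y) <= / 3 ^ L).
  { apply (infinite_sum_dist_le 3 ltac:(lra) _ _ _ _ L
      (cantor_digits_spec x Hx) (cantor_digits_spec y Hy)).
    - apply geom_bounded_sub_dominated; apply cantor_term_bounded.
    - intros i Hi. unfold cantor_term. rewrite Hlow by exact Hi. reflexivity. }
  pose proof (Rinv_pow3_le_pow2 L (S n) HL).
  pose proof (masked_term_dist_le m _ _ (S n) Hmask) as Hdy.
  fold (masked_cantor m x) (masked_cantor m y) in Hdy.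
  replace (/ 2 ^ n) with (/ 2 ^ S n + / 2 ^ S n) by (simpl; field; apply pow_nonzero; lra).
  lra.
Qed.

Lemma masked_cantor_packing_le m n L l : (2 ^ S n <= 3 ^ L)%nat ->
  separated (graph (masked_cantor m)) (/ 2 ^ n) l ->
  (length l <= 2 ^ masked_code_length m L n)%nat.
Proof.
  intros HL. unfold masked_code_length. apply (separated_length_le_code _ _
    (fun p => map (cantor_digits (fst p)) (seq 0 L ++ filter m (seq L (S n - L))))).
  - intros p _. rewrite length_map, length_app, length_seq. reflexivity.
  - intros p q [x [Hx ->]] [y [Hy ->]] Hcode. simpl fst in Hcode.
    rewrite map_ext_in_iff in Hcode.
    apply (masked_cantor_graph_dist_le m x y L n Hx Hy HL).
    + intros i Hi. apply Hcode, in_or_app. left. apply in_seq. lia.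
    + intros i Hi Hm. apply Hcode, in_or_app. destruct (Nat.lt_ge_cases i L).
      * left. apply in_seq. lia.
      * right. apply filter_In. split; [apply in_seq; lia | exact Hm].
Qed.

Lemma alternating_filter_seq_le (p : nat -> bool) a k : (forall i, p (S i) = negb (p i)) ->
  (2 * length (filter p (seq a k)) <= S k)%nat.
Proof.
  intros Halt. revert a. induction k as [k IH] using (well_founded_induction lt_wf). intros a.
  destruct k as [|[|k]]; [simpl; lia | simpl; destruct (p a); simpl; lia |].
  specialize (IH k ltac:(lia) (S (S a))). simpl. rewrite Halt.
  destruct (p a); simpl; lia.
Qed.

(* [3^-(ternary_depth n) <= 2^-(n+1)], so that many ternary digits fix [x] at scale
   [2^-(n+1)]; yet [ternary_depth n] is only about [2n/3]. *)
Definition ternary_depth (n : nat) : nat := 2 * (n / 3 + 1).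

Lemma pow2_le_pow3_ternary_depth n : (2 ^ S n <= 3 ^ ternary_depth n)%nat.
Proof.
  unfold ternary_depth.
  pose proof (Nat.div_mod n 3 ltac:(lia)). pose proof (Nat.mod_upper_bound n 3 ltac:(lia)).
  transitivity (2 ^ (3 * (n / 3 + 1)))%nat; [apply Nat.pow_le_mono_r; lia|].
  rewrite !Nat.pow_mul_r. apply Nat.pow_le_mono_l. simpl. lia.
Qed.

Lemma alternating_packing_exponent_le m n : (forall i, m (S i) = negb (m i)) ->
  INR (masked_code_length m (ternary_depth n) n) <= 5 / 6 * INR n + 2.
Proof.
  intros Halt. unfold masked_code_length.
  generalize (alternating_filter_seq_le m (ternary_depth n) (S n - ternary_depth n) Halt).
  generalize (length (filter m (seq (ternary_depth n) (S n - ternary_depth n)))). intros c Hc.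
  assert (HK : (6 * (ternary_depth n + c) <= 5 * n + 12)%nat).
  { unfold ternary_depth in *. pose proof (Nat.div_mod n 3 ltac:(lia)).
    pose proof (Nat.mod_upper_bound n 3 ltac:(lia)). lia. }
  apply le_INR in HK. rewrite !mult_INR, !plus_INR, !mult_INR in HK.
  replace (INR 6) with 6 in HK by (simpl; ring). replace (INR 5) with 5 in HK by (simpl; ring).
  replace (INR 12) with 12 in HK by (simpl; ring). rewrite plus_INR. lra.
Qed.

Lemma full_masked_cantor_point_sep m k s s' : (forall i, m i = true) ->
  length s = k -> length s' = k -> s <> s' ->
  / 2 ^ k <= Rabs (masked_cantor m (cantor_point s) - masked_cantor m (cantor_point s')).
Proof.
  intros Hm Hs Hs' Hne.
  assert (Hbeyond : forall i, (k <= i)%nat -> list_digits s i = list_digits s' i).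
  { intros i Hi. unfold list_digits. rewrite !nth_overflow by lia. reflexivity. }
  assert (Hdiff : exists i, list_digits s i <> list_digits s' i).
  { apply NNPP. intros Hall. apply Hne, (nth_ext _ _ false false); [congruence|].
    intros i _. apply NNPP. intros Hi. apply Hall. exists i. exact Hi. }
  destruct Hdiff as [i Hi]. destruct (first_mismatch _ _ i Hi) as [j [_ [Hj Hlow]]].
  assert (Hjk : (j < k)%nat).
  { destruct (Nat.lt_ge_cases j k) as [|Hkj]; [assumption|]. exfalso. exact (Hj (Hbeyond j Hkj)). }
  unfold masked_cantor. rewrite !cantor_digits_point.
  pose proof (infinite_sum_dist_ge_window 2 ltac:(lra) _ _ _ _ j k
    (masked_term_summable m (list_digits s)) (masked_term_summable m (list_digits s'))
    (geom_bounded_sub_dominated 2 _ _ (masked_term_bounded _ _) (masked_term_bounded _ _))) as H.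
  rewrite masked_term_gap in H by auto.
  replace (/ 2 ^ S j - (/ 2 ^ S j - / 2 ^ k)) with (/ 2 ^ k) in H by ring.
  apply H; [| exact Hjk |]; intros i' Hi'; unfold masked_term;
    [rewrite Hlow | rewrite Hbeyond]; auto.
Qed.

Lemma full_masked_cantor_packing_ge m k : (forall i, m i = true) ->
  exists l, separated (graph (masked_cantor m)) (/ 2 ^ S k) l /\ length l = (2 ^ k)%nat.
Proof.
  intros Hm. set (point s := (cantor_point s, masked_cantor m (cantor_point s))).
  exists (map point (bool_lists k)). split; [|rewrite length_map; apply bool_lists_length].
  assert (Hscale : / 2 ^ S k < / 2 ^ k).
  { apply Rinv_lt_contravar; [apply Rmult_lt_0_compat; apply pow_lt; lra|].
    simpl. pose proof (pow_lt 2 k ltac:(lra)). lra. }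
  assert (Hsep : forall s s', In s (bool_lists k) -> In s' (bool_lists k) -> s <> s' ->
    / 2 ^ S k < dist2 (point s) (point s')).
  { intros s s' Hs Hs' Hne. apply In_bool_lists in Hs, Hs'.
    pose proof (full_masked_cantor_point_sep m k s s' Hm Hs Hs' Hne).
    pose proof (Rabs_snd_le_dist2 (point s) (point s')). simpl in *. lra. }
  split; [|split].
  - apply NoDup_map_NoDup_ForallPairs; [|apply NoDup_bool_lists].
    intros s s' Hs Hs' Heq. apply NNPP. intros Hne. specialize (Hsep s s' Hs Hs' Hne).
    rewrite Heq in Hsep. unfold dist2 in Hsep. rewrite !Rminus_diag in Hsep.
    replace (0 ^ 2 + 0 ^ 2) with 0 in Hsep by ring. rewrite sqrt_0 in Hsep.
    pose proof (Rinv_pow_pos 2 ltac:(lra) (S k)). lra.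
  - intros p Hp. apply in_map_iff in Hp. destruct Hp as [s [<- _]].
    exists (cantor_point s). split; [apply cantor_point_cantor | reflexivity].
  - intros p q Hp Hq Hpq. apply in_map_iff in Hp, Hq.
    destruct Hp as [s [<- Hs]], Hq as [s' [<- Hs']].
    apply Hsep; [exact Hs | exact Hs' | intros ->; exact (Hpq eq_refl)].
Qed.

Lemma graph_masked_cantor_origin m :
  graph (masked_cantor m) (cantor_point nil, masked_cantor m (cantor_point nil)).
Proof. exists (cantor_point nil). split; [apply cantor_point_cantor | reflexivity]. Qed.

Lemma alternating_masked_cantor_box_dim_le m : (forall i, m (S i) = negb (m i)) ->
  exists d, is_upper_box_dim (graph (masked_cantor m)) d /\ d <= 5 / 6.
Proof.
  intros Halt.
  apply (upper_box_dim_le _ _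
    (fun n => masked_code_length m (ternary_depth n) n)
    (5 / 6) 2 (graph_masked_cantor_origin m)).
  - intros n l. apply masked_cantor_packing_le, pow2_le_pow3_ternary_depth.
  - intros n _. exact (alternating_packing_exponent_le m n Halt).
Qed.

Lemma full_masked_cantor_box_dim_ge m : (forall i, m i = true) ->
  exists d, is_upper_box_dim (graph (masked_cantor m)) d /\ 1 <= d.
Proof.
  intros Hm.
  destruct (upper_box_dim_le _ _ S 1 1 (graph_masked_cantor_origin m)) as [d [Hd _]].
  - intros n l Hl. pose proof (masked_cantor_packing_le m n (S n) l
      (Nat.pow_le_mono_l 2 3 (S n) ltac:(lia)) Hl) as Hlen.
    unfold masked_code_length in Hlen. rewrite Nat.sub_diag, Nat.add_0_r in Hlen. exact Hlen.
  - intros n _. rewrite S_INR. lra.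
  - exists d. split; [exact Hd|]. apply (upper_box_dim_ge _ d Nat.pred 1 1 Hd).
    + intros [|k] Hk; [lia|]. destruct (full_masked_cantor_packing_ge m k Hm) as [l [Hl Hlen]].
      exists l. split; [exact Hl | simpl; lia].
    + intros [|k] Hk; [lia|]. rewrite S_INR. simpl. lra.
Qed.

Theorem theorem1p9 :
  exists f g : R -> R,
    continuous_on_cantor f /\ continuous_on_cantor g /\
    exists df dg dfg : R,
      is_upper_box_dim (graph f) df /\
      is_upper_box_dim (graph g) dg /\
      is_upper_box_dim (graph (fun x => f x + g x)) dfg /\
      dfg > Rmax df dg.
Proof.
  assert (Heven : forall i, Nat.even (S i) = negb (Nat.even i))
    by (intros i; rewrite Nat.even_succ, Nat.negb_even; reflexivity).
  assert (Hodd : forall i, Nat.odd (S i) = negb (Nat.odd i))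
    by (intros i; rewrite Nat.odd_succ, Nat.negb_odd; reflexivity).
  assert (Hsum : (fun x => masked_cantor Nat.even x + masked_cantor Nat.odd x)
                 = masked_cantor (fun i => (Nat.even i || Nat.odd i)%bool)).
  { apply functional_extensionality. intros x. apply masked_cantor_add.
    intros i. rewrite <- Nat.negb_even. destruct (Nat.even i); reflexivity. }
  destruct (alternating_masked_cantor_box_dim_le _ Heven) as [df [Hf Hdf]].
  destruct (alternating_masked_cantor_box_dim_le _ Hodd) as [dg [Hg Hdg]].
  destruct (full_masked_cantor_box_dim_ge (fun i => (Nat.even i || Nat.odd i)%bool)
    Nat.orb_even_odd) as [dh [Hh Hdh]].
  exists (masked_cantor Nat.even), (masked_cantor Nat.odd).
  split; [apply masked_cantor_continuous|]. split; [apply masked_cantor_continuous|].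
  exists df, dg, dh. rewrite Hsum. repeat split; try assumption.
  apply Rmax_lub_lt; lra.
Qed.
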